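(* In the standing setup below, every $\phi\in\mathrm{Dr}_1(\mathbf{A}_{\mathcal H},L)$ is $\overline L$-isomorphic to some $\psi\in\mathrm{Dr}_1(\mathbf{A}_{\mathcal H},L)$ with $\psi_{\overline Y}=\tau_L$.
   Context: Standing setup: $\mathbb{F}_q$ is the finite field with $q$ elements. Let $d\ge5$ be odd, $m$ a positive divisor of $d$, $p\in\mathbb{F}_q[X]$ monic irreducible of degree $d/m$, $f=\alpha p^m$ with $\alpha\in\mathbb{F}_q^\times$, and $h\in\mathbb{F}_q[X]$ nonzero of degree $\le(d-1)/2$ and not divisible by $p$. Let $\xi=Y^2+h(X)Y-f(X)$ and assume the affine plane curve $\mathcal H:\xi=0$ is nonsingular. Let $\mathbf{A}_{\mathcal H}=\mathbb{F}_q[X][Y]/(\xi)$, $\mathfrak{p}=\langle p(\overline X),\overline Y\rangle$, $L$ a degree-$m$ extension of $\mathbf{A}_{\mathcal H}/\mathfrak{p}$ (so $[L:\mathbb{F}_q]=d$), $\gamma:\mathbf{A}_{\mathcal H}\to\mathbf{A}_{\mathcal H}/\mathfrak{p}\hookrightarrow L$. $L\{\tau\}$ is the Ore polynomial ring with $\tau a=a^q\tau$; $\tau_L=\tau^d$. A Drinfeld $\mathbf{A}_{\mathcal H}$-module over $L$ is an $\mathbb{F}_q$-algebra morphism $\phi:\mathbf{A}_{\mathcal H}\to L\{\tau\}$ with constant coefficient of $\phi_a$ equal to $\gamma(a)$ and some $\phi_a$ nonconstant; rank $1$ means $\deg_\tau\phi_a=\log_q\#(\mathbf{A}_{\mathcal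 H}/a\mathbf{A}_{\mathcal H})$ for all $a\ne0$; $\mathrm{Dr}_1(\mathbf{A}_{\mathcal H},L)$ is the set of these. $\phi,\psi$ are $\overline L$-isomorphic if $\lambda\phi_a\lambda^{-1}=\psi_a$ for all $a$, for some $\lambda\in\overline L^\times$. *)

From HB Require Import structures.
From mathcomp Require Import all_boot all_order all_algebra all_field.
From mathcomp Require Import ring_quotient generic_quotient closed_field.

Set Implicit Arguments.
Unset Strict Implicit.
Unset Printing Implicit Defensive.

Import GRing.Theory.
Local Open Scope ring_scope.
Local Open Scope quotient_scope.

Definition xi (F : fieldType) (h f : {poly F}) : {poly {poly F}} :=
  'X^2 + h%:P * 'X - f%:P.

Lemma size_xi_low (F : fieldType) (h f : {poly F}) :
  (size (h%:P * 'X - f%:P : {poly {poly F}})%R < 3)%N.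
Proof.
apply: (leq_ltn_trans (size_polyD _ _)); rewrite gtn_max size_polyN size_polyC.
rewrite (leq_ltn_trans (leq_b1 _)) // andbT.
apply: (leq_ltn_trans (size_polyMleq _ _)); rewrite size_polyX size_polyC.
by case: (_ != _).
Qed.

Lemma xi_monic (F : fieldType) (h f : {poly F}) : xi h f \is monic.
Proof.
by rewrite /xi -addrA monicE lead_coefDl ?lead_coefXn // size_polyXn size_xi_low.
Qed.

Lemma size_xi (F : fieldType) (h f : {poly F}) : size (xi h f) = 3%N.
Proof.
rewrite /xi -addrA size_polyDl; first by rewrite size_polyXn.
by rewrite size_polyXn size_xi_low.
Qed.

Definition xi_ideal (F : fieldType) (h f : {poly F}) : {pred {poly {poly F}}} :=
  fun P => Pdiv.Ring.rdvdp (xi h f) P.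

Lemma xi_ideal_closed (F : fieldType) (h f : {poly F}) :
  idealr_closed (xi_ideal h f).
Proof.
have mon := xi_monic h f.
split.
- by rewrite unfold_in /xi_ideal Pdiv.Ring.rdvdp0.
- rewrite unfold_in /xi_ideal /Pdiv.Ring.rdvdp Pdiv.Ring.rmodp_small ?oner_eq0 //.
  by rewrite size_poly1 size_xi.
- move=> a u v; rewrite !unfold_in /xi_ideal.
  move=> /(Pdiv.RingMonic.rdvdpP mon) [qu ->] /(Pdiv.RingMonic.rdvdpP mon) [qv ->].
  by apply/(Pdiv.RingMonic.rdvdpP mon); exists (a * qu + qv); rewrite mulrDl mulrA.
Qed.

HB.instance Definition _ (F : fieldType) (h f : {poly F}) :=
  isIdealr.Build _ (xi_ideal h f) (xi_ideal_closed h f).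


Notation AH h f := {ideal_quot (xi_ideal h f)}.

Definition AHpi (F : fieldType) (h f : {poly F}) (P : {poly {poly F}}) : AH h f :=
  \pi_(AH h f) P.

Definition Xbar (F : fieldType) (h f : {poly F}) : AH h f := AHpi h f ('X%:P).
Definition Ybar (F : fieldType) (h f : {poly F}) : AH h f := AHpi h f 'X.
Definition AHconst (F : fieldType) (h f : {poly F}) (c : F) : AH h f :=
  AHpi h f (c%:P%:P).
Definition in_frakp (F : fieldType) (h f p : {poly F}) (a : AH h f) : Prop :=
  exists u v : AH h f, a = u * AHpi h f (p%:P) + v * Ybar h f.

Definition alg_closure (K : countFieldType) : countClosedFieldType :=
  projT1 (countable_algebraic_closure K).
Definition to_alg_closure (K : countFieldType) : {rmorphism K -> alg_closure K} :=
  sval (projT2 (countable_algebraic_closure K)).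

Definition eval2 (K : nzRingType) (P : {poly {poly K}}) (x y : K) : K :=
  (P.[y%:P]).[x].

Definition nonsingular_curve (F : finFieldType) (h f : {poly F}) : Prop :=
  let P := map_poly (map_poly (to_alg_closure F)) (xi h f) in
  forall x y : alg_closure F,
    ~ [/\ eval2 P x y = 0,
          eval2 (map_poly deriv P) x y = 0   (* d/dX *)
        & eval2 (deriv P) x y = 0 ].         (* d/dY *)

(* Ore polynomial ring K{tau}, tau c = c^q tau.  An element            *)
(* sum_i c_i tau^i is represented by the coefficient polynomial        *)
(* sum_i c_i X^i : {poly K}; addition is that of {poly K}, and         *)
(* multiplication is the twisted product ore_mul q.                    *)
Definition ore_mul (K : nzRingType) (q : nat) (P Q : {poly K}) : {poly K} :=
  \sum_(i < size P) \sum_(j < size Q) (P`_i * Q`_j ^+ (q ^ i)) *: 'X^(i + j).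

Definition deg_tau (K : nzRingType) (P : {poly K}) : nat := (size P).-1.

(* #(R / aR) = n *)
Definition quot_card_eq (R : comNzRingType) (a : R) (n : nat) : Prop :=
  exists s : seq R,
    [/\ size s = n,
        (forall i j, (i < n)%N -> (j < n)%N ->
           (exists c, s`_i - s`_j = a * c) -> i = j)
      & (forall x, exists2 i, (i < n)%N & exists c, x - s`_i = a * c)].

Definition is_Drinfeld_module (F L : finFieldType) (iota : {rmorphism F -> L})
    (h f : {poly F}) (gamma : AH h f -> L) (phi : AH h f -> {poly L}) : Prop :=
  [/\
      [/\ (forall a b, phi (a + b) = phi a + phi b),
          (forall a b, phi (a * b) = ore_mul #|F| (phi a) (phi b)),
          phi 1 = 1
        & (forall c : F, phi (AHconst h f c) = (iota c)%:P)],
      (forall a, (phi a)`_0 = gamma a)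
    &
      exists a, (0 < deg_tau (phi a))%N ].

Definition is_rank1 (F L : finFieldType) (h f : {poly F})
    (phi : AH h f -> {poly L}) : Prop :=
  forall a : AH h f, a != 0 -> quot_card_eq a (#|F| ^ deg_tau (phi a)).

Definition Dr1 (F L : finFieldType) (iota : {rmorphism F -> L})
    (h f : {poly F}) (gamma : AH h f -> L) (phi : AH h f -> {poly L}) : Prop :=
  is_Drinfeld_module iota gamma phi /\ is_rank1 phi.

Definition Lbar_isomorphic (F L : finFieldType) (h f : {poly F})
    (phi psi : AH h f -> {poly L}) : Prop :=
  exists lam : alg_closure L, lam != 0 /\
    forall a : AH h f,
      ore_mul #|F| (ore_mul #|F| lam%:P (map_poly (to_alg_closure L) (phi a)))
              (lam^-1)%:P
      = map_poly (to_alg_closure L) (psi a).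

From HB Require Import structures.
From mathcomp Require Import all_boot all_order all_algebra all_field.
From mathcomp Require Import ring_quotient generic_quotient closed_field.
From mathcomp Require Import abelian zify ring.

Set Implicit Arguments.
Unset Strict Implicit.
Unset Printing Implicit Defensive.

Import GRing.Theory.
Local Open Scope ring_scope.
Local Open Scope quotient_scope.

(* Write q = #|F| and v for the tau-adic valuation (index of the lowest nonzero
   coefficient).  Since A_H / Ybar has at most q ^ d elements, the rank-1
   condition gives deg_tau phi_Y <= d.  In A_H, f = Ybar (Ybar + h) and
   gamma (Ybar + h) = gamma h != 0, so v phi_Y = v phi_f = m v phi_p.  Comparing
   the coefficients of tau ^ e, e = v phi_p > 0, in phi_p phi_X = phi_X phi_p
   shows that gamma Xbar, a root of p, is fixed by x |-> x ^+ (q ^ e); hence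
   deg p <= e and v phi_Y >= m deg p = d.  So phi_Y = ell tau ^ d.  Conjugating
   by a (q ^ d - 1)-th root of ell in an algebraic closure turns phi_Y into
   tau_L; every conjugated phi_a then commutes with tau_L, so its coefficients
   are fixed by the #|L|-Frobenius, i.e. they lie in L. *)

Lemma big_ord_widen_supp (R : nmodType) (a b : nat) (g : nat -> R) :
  (a <= b)%N -> (forall i, (a <= i)%N -> g i = 0) ->
  \sum_(i < a) g i = \sum_(i < b) g i.
Proof.
move=> ab g0; rewrite (big_ord_widen _ _ ab) big_mkcond /=.
by apply: eq_bigr => i _; case: ltnP => // /g0.
Qed.

Section OreMul.
Variable q : nat.
Hypothesis q_gt0 : (0 < q)%N.

Lemma expr0_qpow (K : nzSemiRingType) i : 0 ^+ (q ^ i) = 0 :> K.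
Proof. by rewrite expr0n expn_eq0 eqn0Ngt q_gt0. Qed.

Lemma coef_ore_mul (K : comNzRingType) (P Q : {poly K}) n :
  (ore_mul q P Q)`_n = \sum_(i < n.+1) P`_i * Q`_(n - i) ^+ (q ^ i).
Proof.
pose g i := if (i <= n)%N then P`_i * Q`_(n - i) ^+ (q ^ i) else 0.
have row i : (\sum_(j < size Q) (P`_i * Q`_j ^+ (q ^ i)) *: 'X^(i + j))`_n = g i.
  rewrite (eq_bigr (fun j : 'I_ _ => 'X^i * ((P`_i * Q`_j ^+ (q ^ i)) *: 'X^j))); last first.
    by move=> j _; rewrite exprD -scalerAr.
  rewrite -mulr_sumr -(poly_def _ (fun j => P`_i * Q`_j ^+ (q ^ i))) coefXnM coef_poly.
  rewrite /g ltnNge; case: (i <= n)%N => //=; case: ltnP => // sQ.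
  by rewrite (nth_default 0 sQ) expr0_qpow mulr0.
rewrite /ore_mul coef_sum (eq_bigr (fun i : 'I_ _ => g i)); last by move=> i _; rewrite row.
rewrite (@big_ord_widen_supp _ _ (size P + n.+1) g (leq_addr _ _)); last first.
  by move=> i /leq_sizeP P0; rewrite /g P0 // mul0r if_same.
rewrite -(@big_ord_widen_supp _ n.+1 _ g (leq_addl _ _)); last first.
  by move=> i ni; rewrite /g leqNgt ni.
by apply: eq_bigr => i _; rewrite /g -ltnS ltn_ord.
Qed.

Lemma ore_mul0l (K : nzRingType) (Q : {poly K}) : ore_mul q 0 Q = 0.
Proof. by rewrite /ore_mul size_poly0 big_ord0. Qed.

Lemma ore_mul_map (K K' : comNzRingType) (g : {rmorphism K -> K'}) P Q :
  map_poly g (ore_mul q P Q) = ore_mul q (map_poly g P) (map_poly g Q).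
Proof.
apply/polyP => n; rewrite coef_map /= !coef_ore_mul rmorph_sum.
by apply: eq_bigr => i _; rewrite rmorphM rmorphXn /= !coef_map.
Qed.

Lemma ore_mulXn_comm (K : comNzRingType) (B : {poly K}) d :
  ore_mul q B 'X^d = ore_mul q 'X^d B -> forall n, B`_n ^+ (q ^ d) = B`_n.
Proof.
move=> BX n; have ltn_nd : (n < (n + d).+1)%N by rewrite ltnS leq_addr.
have ltd_nd : (d < (n + d).+1)%N by rewrite ltnS leq_addl.
have right_Xd : (ore_mul q B 'X^d)`_(n + d) = B`_n.
  rewrite coef_ore_mul (bigD1 (Ordinal ltn_nd)) //= addKn coefXn eqxx expr1n mulr1.
  rewrite big1 ?addr0 // => i /eqP ne_i; rewrite coefXn.
  case: eqP => [eq_i|_]; last by rewrite expr0_qpow mulr0.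
  by case: ne_i; apply: val_inj => /=; have := ltn_ord i; lia.
have left_Xd : (ore_mul q 'X^d B)`_(n + d) = B`_n ^+ (q ^ d).
  rewrite coef_ore_mul (bigD1 (Ordinal ltd_nd)) //= addnK coefXn eqxx mul1r.
  rewrite big1 ?addr0 // => i /eqP ne_i; rewrite coefXn.
  by case: eqP => [eq_i|_]; [case: ne_i; apply: val_inj | rewrite mul0r].
by rewrite -left_Xd -BX right_Xd.
Qed.

End OreMul.

(* [lowdeg 0 = 0]. *)
Definition lowdeg (K : nzRingType) (P : {poly K}) : nat := find (fun c => c != 0) P.

Section LowDegree.
Variable K : nzRingType.
Implicit Types P : {poly K}.

Lemma coef_lt_lowdeg P i : (i < lowdeg P)%N -> P`_i = 0.
Proof. by move=> /(before_find 0) /negbFE /eqP. Qed.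

Lemma coef_lowdeg_neq0 P : P != 0 -> P`_(lowdeg P) != 0.
Proof.
move=> P0; apply: (@nth_find _ 0 (fun c => c != 0)).
apply/hasP; exists (lead_coef P); last by rewrite lead_coef_eq0.
by rewrite lead_coefE mem_nth // prednK // size_poly_gt0.
Qed.

Lemma lowdegE P e : P`_e != 0 -> (forall i, (i < e)%N -> P`_i = 0) -> lowdeg P = e.
Proof.
move=> Pe Pbelow; have P0 : P != 0 by apply: contraNneq Pe => ->; rewrite coef0.
case: (ltngtP (lowdeg P) e) => // [/Pbelow|/coef_lt_lowdeg] Pz.
  by have := coef_lowdeg_neq0 P0; rewrite Pz eqxx.
by move: Pe; rewrite Pz eqxx.
Qed.

Lemma lowdegC (c : K) : c != 0 -> lowdeg c%:P = 0%N.
Proof. by move=> c0; apply: lowdegE => //; rewrite coefC. Qed.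

Lemma lowdeg_monomial P d :
  P != 0 -> (size P <= d.+1)%N -> (d <= lowdeg P)%N -> P = P`_d *: 'X^d.
Proof.
move=> P0 sP lowP; apply/polyP => n; rewrite coefZ coefXn.
case: (ltngtP n d) => [ltnd|ltdn|->]; last by rewrite mulr1.
- by rewrite mulr0 coef_lt_lowdeg // (leq_trans ltnd lowP).
- by rewrite mulr0 nth_default // (leq_trans sP ltdn).
Qed.

End LowDegree.

Section OreMulLowDegree.
Variable q : nat.
Hypothesis q_gt0 : (0 < q)%N.

Lemma coef_ore_mul_lowdeg (K : comNzRingType) (P Q : {poly K}) n :
  (n <= lowdeg P + lowdeg Q)%N ->
  (ore_mul q P Q)`_n =
    if n == (lowdeg P + lowdeg Q)%N then P`_(lowdeg P) * Q`_(lowdeg Q) ^+ (q ^ lowdeg P)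
    else 0.
Proof.
move=> le_n; rewrite coef_ore_mul //.
case: eqP => [->|ne_n].
  have lt_lowP : (lowdeg P < (lowdeg P + lowdeg Q).+1)%N by rewrite ltnS leq_addr.
  rewrite (bigD1 (Ordinal lt_lowP)) //= addKn big1 ?addr0 // => i /eqP ne_i.
  have [lt_i|ge_i] := ltnP i (lowdeg P); first by rewrite coef_lt_lowdeg // mul0r.
  have gt_i : (lowdeg P < i)%N.
    by rewrite ltn_neqAle ge_i andbT; apply/eqP => eq_i; apply: ne_i; apply: val_inj.
  rewrite [Q`__]coef_lt_lowdeg ?expr0_qpow ?mulr0 //; have := ltn_ord i; lia.
rewrite big1 // => i _; have [lt_i|ge_i] := ltnP i (lowdeg P).
  by rewrite coef_lt_lowdeg // mul0r.
rewrite [Q`__]coef_lt_lowdeg ?expr0_qpow ?mulr0 //.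
by move: ne_n le_n ge_i (ltn_ord i); rewrite ltnS; lia.
Qed.

Section IntegralDomain.
Variable K : idomainType.
Implicit Types P Q : {poly K}.

Lemma coef_ore_mul_lowdeg_neq0 P Q : P != 0 -> Q != 0 ->
  (ore_mul q P Q)`_(lowdeg P + lowdeg Q) != 0.
Proof.
move=> P0 Q0; rewrite coef_ore_mul_lowdeg // eqxx.
by rewrite mulf_neq0 ?expf_neq0 ?coef_lowdeg_neq0.
Qed.

Lemma ore_mul_neq0 P Q : P != 0 -> Q != 0 -> ore_mul q P Q != 0.
Proof.
move=> P0 Q0; apply: contraNneq (coef_ore_mul_lowdeg_neq0 P0 Q0) => ->.
by rewrite coef0.
Qed.

Lemma lowdeg_ore_mul P Q : P != 0 -> Q != 0 ->
  lowdeg (ore_mul q P Q) = (lowdeg P + lowdeg Q)%N.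
Proof.
move=> P0 Q0; apply: lowdegE; first exact: coef_ore_mul_lowdeg_neq0.
by move=> n lt_n; rewrite coef_ore_mul_lowdeg ?ltn_eqF // ltnW.
Qed.

Lemma ore_mul_comm_lowdeg P T : P != 0 -> ore_mul q P T = ore_mul q T P ->
  T`_0 ^+ (q ^ lowdeg P) = T`_0.
Proof.
set e := lowdeg P => P0 PT; have /(congr1 (fun R : {poly K} => R`_e)) := PT.
rewrite !coef_ore_mul // big_ord_recr big_ord_recl /= subnn subn0 expn0 expr1.
rewrite !big1 ?add0r ?addr0 => [|i _|i _]; last 2 first.
- rewrite [P`__]coef_lt_lowdeg ?expr0_qpow ?mulr0 //.
  by have := ltn_ord i; rewrite /bump /=; lia.
- by rewrite coef_lt_lowdeg ?mul0r.
by rewrite mulrC => /mulIf; apply; apply: coef_lowdeg_neq0.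
Qed.

End IntegralDomain.
End OreMulLowDegree.

Section OreConj.
Variables (K : fieldType) (q : nat) (lam : K).
Hypotheses (q_gt0 : (0 < q)%N) (lam_neq0 : lam != 0).

Definition ore_conj (P : {poly K}) : {poly K} :=
  \poly_(i < size P) (lam * P`_i * lam^-1 ^+ (q ^ i)).

Lemma coef_ore_conj P i : (ore_conj P)`_i = lam * P`_i * lam^-1 ^+ (q ^ i).
Proof.
by rewrite coef_poly; case: ltnP => // /leq_sizeP-> //; rewrite mulr0 mul0r.
Qed.

Lemma size_ore_conj P : size (ore_conj P) = size P.
Proof.
have [->|P0] := eqVneq P 0.
  by rewrite /ore_conj size_poly0 poly_def big_ord0 size_poly0.
by rewrite size_poly_eq // -lead_coefE !mulf_neq0 ?expf_neq0 ?invr_neq0 ?lead_coef_eq0.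
Qed.

Lemma ore_conjE P : ore_mul q (ore_mul q lam%:P P) lam^-1%:P = ore_conj P.
Proof.
apply/polyP => n; rewrite coef_ore_conj coef_ore_mul // big_ord_recr /= subnn coefC eqxx.
rewrite big1 ?add0r => [|i _]; last first.
  by rewrite coefC subn_eq0 leqNgt ltn_ord /= (expr0_qpow q_gt0) mulr0.
rewrite coef_ore_mul // big_ord_recl /= coefC eqxx subn0 expn0 expr1.
by rewrite big1 ?addr0 // => i _; rewrite coefC mul0r.
Qed.

Lemma ore_conjD P Q : ore_conj (P + Q) = ore_conj P + ore_conj Q.
Proof. by apply/polyP => n; rewrite coefD !coef_ore_conj coefD mulrDr mulrDl. Qed.

Lemma ore_conjC c : ore_conj c%:P = c%:P.
Proof.
apply/polyP => n; rewrite coef_ore_conj !coefC.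
case: eqP => [->|_]; last by rewrite mulr0 mul0r.
by rewrite expn0 expr1 mulrC mulrA mulVf // mul1r.
Qed.

Lemma ore_conj_mul P Q : ore_conj (ore_mul q P Q) = ore_mul q (ore_conj P) (ore_conj Q).
Proof.
apply/polyP => n; rewrite coef_ore_conj !coef_ore_mul // mulr_sumr mulr_suml.
apply: eq_bigr => i _; rewrite !coef_ore_conj.
have le_in : (i <= n)%N by rewrite -ltnS ltn_ord.
rewrite !exprMn -!exprM -expnD subnK //.
have lamK : lam^-1 ^+ (q ^ i) * lam ^+ (q ^ i) = 1 by rewrite -exprMn mulVf // expr1n.
by rewrite -[LHS]mulr1 -lamK; ring.
Qed.

End OreConj.

Lemma pnat_pchar_card (F : finFieldType) : [pchar F].-nat #|F|.
Proof.
have [p _ pcharFp] := finPcharP F.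
have := abelem_pgroup (fin_ring_pchar_abelem pcharFp).
by rewrite (eq_pnat _ (pcharf_eq pcharFp)) -cardsT.
Qed.

Lemma expf_card_pow (F : finFieldType) (c : F) e : c ^+ (#|F| ^ e) = c.
Proof. by elim: e => [|e IHe]; rewrite ?expr1 // expnSr exprM IHe expf_card. Qed.

Lemma horner_map_frob (F : finFieldType) (L : fieldType) (iota : {rmorphism F -> L})
    (P : {poly F}) (t : L) e :
  (map_poly iota P).[t] ^+ (#|F| ^ e) = (map_poly iota P).[t ^+ (#|F| ^ e)].
Proof.
have frobD : {morph (fun x : L => x ^+ (#|F| ^ e)) : x y / x + y}.
  move=> x y; apply: exprDn_pchar.
  by rewrite (eq_pnat _ (fmorph_pchar iota)) pnatX pnat_pchar_card.
rewrite !horner_coef (big_morph _ frobD (expr0_qpow (ltnW (finNzRing_gt1 F)) _ e)).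
apply: eq_bigr => i _; rewrite exprMn coef_map -rmorphXn expf_card_pow.
by rewrite -!exprM mulnC.
Qed.

Lemma size_uniq_frob_fixed (R : idomainType) (Q : nat) (s : seq R) :
  (1 < Q)%N -> uniq s -> {in s, forall x, x ^+ Q = x} -> (size s <= Q)%N.
Proof.
move=> Q_gt1 s_uniq s_fixed; pose XQX : {poly R} := 'X^Q - 'X.
have size_XQX : size XQX = Q.+1.
  by rewrite /XQX size_polyDl size_polyXn // size_polyN size_polyX.
have XQX_neq0 : XQX != 0 by rewrite -size_poly_eq0 size_XQX.
have s_roots : all (root XQX) s.
  by apply/allP => x /s_fixed x_fixed; rewrite /root !hornerE x_fixed subrr.
by have := max_poly_roots XQX_neq0 s_roots s_uniq; rewrite size_XQX.
Qed.

(* The values at [t] of the polynomials of degree < deg p are pairwise distinct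
   and all fixed by [x |-> x ^+ (#|F| ^ e)], so [#|F| ^ deg p <= #|F| ^ e]. *)
Lemma size_irredp_frob_fixed_root (F : finFieldType) (L : fieldType)
    (iota : {rmorphism F -> L}) (p : {poly F}) (t : L) e :
  irreducible_poly p -> root (map_poly iota p) t -> (0 < e)%N ->
  t ^+ (#|F| ^ e) = t -> ((size p).-1 <= e)%N.
Proof.
move=> p_irr p_t e_gt0 t_fixed; set k := (size p).-1.
have q_gt1 := finNzRing_gt1 F.
pose ev (g : k.-tuple F) := (map_poly iota (Poly g)).[t].
have ev_inj : injective ev.
  move=> g1 g2 ev12; suff Poly12 : Poly g1 = Poly g2 :> {poly F}.
    apply: eq_from_tnth => i.
    by rewrite !(tnth_nth 0) -(coef_Poly g1) -(coef_Poly g2) Poly12.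
  apply: subr0_eq.
  set g : {poly F} := Poly g1 - Poly g2; apply/eqP; apply: contraTT isT => g_neq0.
  have size_g : (size g < size p)%N.
    rewrite (leq_ltn_trans (size_polyD _ _)) // size_polyN gtn_max.
    by rewrite !(leq_ltn_trans (size_Poly _)) // size_tuple /k prednK // ltnW //;
      case: p_irr.
  have p_g : coprimep p g.
    rewrite -gcdp_eqp1; have [//|p_gcd] := irredp_XsubCP p_irr (dvdp_gcdl p g).
    have := dvdp_leq g_neq0 (etrans (esym (eqp_dvdl g p_gcd)) (dvdp_gcdr p g)).
    by rewrite leqNgt size_g.
  have := coprimep_root (etrans (coprimep_map iota _ _) p_g) p_t.
  by rewrite rmorphB hornerD hornerN -/(ev g1) -/(ev g2) ev12 subrr eqxx.
have := @size_uniq_frob_fixed _ (#|F| ^ e) (map ev (enum {: k.-tuple F})).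
rewrite size_map -cardE card_tuple leq_exp2l // map_inj_uniq ?enum_uniq //.
apply=> //; first by rewrite -{1}(expn0 #|F|) ltn_exp2l.
by move=> _ /mapP[g _ ->]; rewrite /ev horner_map_frob t_fixed.
Qed.

Lemma alg_closure_frob_fixed (L : finFieldType) (x : alg_closure L) :
  x ^+ #|L| = x -> exists y, to_alg_closure L y = x.
Proof.
move=> x_fixed; set to := to_alg_closure L; pose s := map to (enum L).
have [/mapP[y _ ->]|x_notin] := boolP (x \in s); first by exists y.
have s_fixed : {in x :: s, forall z, z ^+ #|L| = z}.
  by move=> _ /predU1P[->|/mapP[y _ ->]] //; rewrite -rmorphXn expf_card.
have := @size_uniq_frob_fixed _ #|L| (x :: s) (finNzRing_gt1 L).
rewrite /= size_map -cardE ltnn x_notin map_inj_uniq ?enum_uniq; last exact: fmorph_inj.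
by move=> /(_ isT s_fixed).
Qed.

Lemma closed_field_nroot (C : closedFieldType) n (c : C) :
  (0 < n)%N -> exists x : C, x ^+ n = c.
Proof.
move=> n_gt0; have size_p : size ('X^n - c%:P : {poly C}) = n.+1.
  by rewrite size_polyDl size_polyXn // size_polyN size_polyC ltnS (leq_trans (leq_b1 _)).
have /closed_rootP[x] : size ('X^n - c%:P : {poly C}) != 1%N by rewrite size_p eqSS -lt0n.
by rewrite /root !hornerE subr_eq0 => /eqP; exists x.
Qed.

Section CoordinateRing.
Variables (F : fieldType) (h f : {poly F}).
Implicit Types P Q : {poly {poly F}}.

(* [AHpi] folds the canonical morphism [\pi], which the generic [rmorph*]
   rewrite rules then no longer recognize. *)

Lemma AHpiD P Q : AHpi h f (P + Q) = AHpi h f P + AHpi h f Q.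
Proof. exact: rmorphD. Qed.

Lemma AHpiB P Q : AHpi h f (P - Q) = AHpi h f P - AHpi h f Q.
Proof. exact: rmorphB. Qed.

Lemma AHpiM P Q : AHpi h f (P * Q) = AHpi h f P * AHpi h f Q.
Proof. exact: rmorphM. Qed.

Lemma AHpiX P n : AHpi h f (P ^+ n) = AHpi h f P ^+ n.
Proof. exact: rmorphXn. Qed.

Lemma AHpi0 : AHpi h f 0 = 0.
Proof. exact: rmorph0. Qed.

Lemma AHpi_eq0 P : (AHpi h f P == 0) = Pdiv.Ring.rdvdp (xi h f) P.
Proof. by rewrite -[X in _ == X]AHpi0 /AHpi -Quotient.idealrBE subr0. Qed.

Lemma AHpi_repr (a : AH h f) : AHpi h f (repr a) = a.
Proof. exact: reprK. Qed.

Lemma Ybar_mul_Ybar_add_h : Ybar h f * (Ybar h f + AHpi h f h%:P) = AHpi h f f%:P.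
Proof.
have xi0 : AHpi h f (xi h f) = 0.
  by apply/eqP; rewrite AHpi_eq0 (Pdiv.RingMonic.rdvdpp (xi_monic h f)).
apply/eqP; rewrite -subr_eq0 -[0]xi0 /xi /Ybar AHpiB AHpiD !AHpiM.
by rewrite mulrDr (mulrC (AHpi h f h%:P)).
Qed.

Lemma Ybar_neq0 : Ybar h f != 0.
Proof.
rewrite /Ybar AHpi_eq0 /Pdiv.Ring.rdvdp Pdiv.Ring.rmodp_small ?polyX_eq0 //.
by rewrite size_polyX size_xi.
Qed.

Lemma AHpi_polyC_neq0 (c : {poly F}) : c != 0 -> AHpi h f c%:P != 0.
Proof.
move=> c_neq0; rewrite AHpi_eq0 /Pdiv.Ring.rdvdp Pdiv.Ring.rmodp_small ?polyC_eq0 //.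
by rewrite size_polyC size_xi (leq_ltn_trans (leq_b1 _)).
Qed.

Lemma rmorph_AHpi_polyC (L : comNzRingType) (iota : {rmorphism F -> L})
    (gamma : {rmorphism AH h f -> L}) :
  (forall c, gamma (AHconst h f c) = iota c) ->
  forall g : {poly F}, gamma (AHpi h f g%:P) = (map_poly iota g).[gamma (Xbar h f)].
Proof.
move=> gammaC; elim/poly_ind => [|g c IHg]; first by rewrite AHpi0 !rmorph0 horner0.
rewrite polyCD polyCM AHpiD AHpiM !rmorphD !rmorphM /= IHg.
rewrite -/(Xbar h f) -/(AHconst h f c) gammaC.
by rewrite map_polyX map_polyC !hornerE.
Qed.

(* Modulo [Ybar], every class is that of a polynomial in [X] reduced modulo
   [f], because [f = Ybar (Ybar + h)] in [A_H]. *)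
Lemma AHpi_modYbar (a : AH h f) :
  exists c, a - AHpi h f ((repr a)`_0 %% f)%:P = Ybar h f * c.
Proof.
set P := repr a; set r := P`_0 %% f; set dq := P`_0 %/ f.
have P_split : P = (P`_0)%:P + drop_poly 1 P * 'X.
  rewrite -{1}(poly_take_drop 1 P) [take_poly 1 P]size1_polyC ?size_take_poly //.
  by rewrite coef_take_poly.
exists (AHpi h f (drop_poly 1 P) + AHpi h f dq%:P * (Ybar h f + AHpi h f h%:P)).
rewrite -{1}(AHpi_repr a) -/P {1}P_split {1}(divp_eq P`_0 f) polyCD polyCM.
rewrite !AHpiD !AHpiM -Ybar_mul_Ybar_add_h /Ybar -/r -/dq.
ring.
Qed.

Lemma h_notin_frakp (p : {poly F}) :
  p %| f -> ~~ (p %| h) -> ~ in_frakp p (AHpi h f h%:P).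
Proof.
move=> p_f /negP p_h [u [v]]; rewrite -(AHpi_repr u) -(AHpi_repr v) /Ybar -!AHpiM -AHpiD.
move/eqP; rewrite -subr_eq0 -AHpiB AHpi_eq0 => /(Pdiv.RingMonic.rdvdpP (xi_monic h f))[W].
move=> /(congr1 (fun P => P.[0])); rewrite /xi !hornerE expr0n sub0r mulrN.
move/eqP; rewrite subr_eq => /eqP h_eq; apply: p_h.
by rewrite h_eq dvdp_add ?dvdpNr ?dvdp_mull.
Qed.

End CoordinateRing.

Lemma quot_card_eq1 (R : comNzRingType) (a : R) : quot_card_eq a 1 -> exists c, 1 = a * c.
Proof.
move=> [s [_ _ s_cover]]; have [i + [c1 c1E]] := s_cover 1; have [j + [c0 c0E]] := s_cover 0.
rewrite !ltnS !leqn0 => /eqP j0 /eqP i0; subst i j.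
by exists (c1 - c0); rewrite mulrBr -c1E -c0E sub0r opprK subrK.
Qed.

(* [A_H / Ybar] is covered by the classes of the polynomials of degree < deg f. *)
Lemma quot_card_Ybar_le (F : finFieldType) (h f : {poly F}) n :
  f != 0 -> quot_card_eq (Ybar h f) n -> (n <= #|F| ^ (size f).-1)%N.
Proof.
move=> f_neq0 [s [_ s_distinct _]]; set D := (size f).-1.
pose r (a : AH h f) := (repr a)`_0 %% f.
have size_r a : (size (r a) <= D)%N.
  by have := ltn_modpN0 (repr a)`_0 f_neq0; rewrite /D; case: (size f).
pose coefs (i : 'I_n) : D.-tuple F := [tuple (r s`_i)`_j | j < D].
have coefs_inj : injective coefs.
  move=> i j coefs_ij; apply: val_inj; apply: s_distinct (ltn_ord i) (ltn_ord j) _.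
  have r_ij : r s`_i = r s`_j.
    apply/polyP => k; have [lt_kD|le_Dk] := ltnP k D.
      by have := congr1 (fun t => tnth t (Ordinal lt_kD)) coefs_ij; rewrite !tnth_mktuple.
    have size_r_le a : (size (r a) <= k)%N := leq_trans (size_r a) le_Dk.
    by rewrite (nth_default 0 (size_r_le s`_i)) (nth_default 0 (size_r_le s`_j)).
  have [ci ciE] := AHpi_modYbar s`_i; have [cj cjE] := AHpi_modYbar s`_j.
  by exists (ci - cj); rewrite mulrBr -ciE -cjE -/(r s`_i) -/(r s`_j) r_ij opprB addrA subrK.
by have := leq_card coefs coefs_inj; rewrite card_ord card_tuple.
Qed.

Section DrinfeldModule.
Variables (F L : finFieldType) (iota : {rmorphism F -> L}) (h f : {poly F}).
Variables (gamma : {rmorphism AH h f -> L}) (phi : AH h f -> {poly L}).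
Hypothesis phi_Drinfeld : is_Drinfeld_module iota gamma phi.

Local Notation q := #|F|.

Let q_gt0 : (0 < q)%N. Proof. exact: ltnW (finNzRing_gt1 F). Qed.

Let phiM a b : phi (a * b) = ore_mul q (phi a) (phi b).
Proof. by case: phi_Drinfeld => [[_ ->]]. Qed.

Let phi_coef0 a : (phi a)`_0 = gamma a.
Proof. by case: phi_Drinfeld. Qed.

Lemma phi_mul_neq0 a b : phi a != 0 -> phi b != 0 -> phi (a * b) != 0.
Proof. by move=> a0 b0; rewrite phiM ore_mul_neq0. Qed.

Lemma lowdeg_phi_mul a b : phi a != 0 -> phi b != 0 ->
  lowdeg (phi (a * b)) = (lowdeg (phi a) + lowdeg (phi b))%N.
Proof. by move=> a0 b0; rewrite phiM lowdeg_ore_mul. Qed.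

Lemma phi_neq0_gamma a : gamma a != 0 -> phi a != 0.
Proof. by apply: contraNneq => phi0; rewrite -phi_coef0 phi0 coef0. Qed.

Lemma lowdeg_phi_gamma a : gamma a != 0 -> lowdeg (phi a) = 0%N.
Proof. by move=> gamma_a; apply: lowdegE; rewrite ?phi_coef0. Qed.

Lemma lowdeg_phi_gt0 a : phi a != 0 -> gamma a = 0 -> (0 < lowdeg (phi a))%N.
Proof.
move=> phi_a gamma_a; rewrite lt0n; apply: contraTneq (coef_lowdeg_neq0 phi_a) => ->.
by rewrite phi_coef0 gamma_a eqxx.
Qed.

Lemma gamma_frob_fixed a b : phi a != 0 -> gamma b ^+ (q ^ lowdeg (phi a)) = gamma b.
Proof.
by move=> phi_a; rewrite -phi_coef0 (ore_mul_comm_lowdeg q_gt0 phi_a) // -!phiM mulrC.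
Qed.

Lemma phi_expr_neq0 a n : phi a != 0 -> phi (a ^+ n) != 0.
Proof.
move=> phi_a; elim: n => [|n IHn]; last by rewrite exprS phi_mul_neq0.
by case: phi_Drinfeld => [[_ _ -> _] _ _]; rewrite oner_neq0.
Qed.

Lemma lowdeg_phi_expr a n : phi a != 0 -> lowdeg (phi (a ^+ n)) = (n * lowdeg (phi a))%N.
Proof.
move=> phi_a; elim: n => [|n IHn].
  by case: phi_Drinfeld => [[_ _ -> _] _ _]; rewrite -polyC1 lowdegC ?oner_neq0.
by rewrite exprS lowdeg_phi_mul ?phi_expr_neq0 // IHn mulSn.
Qed.

Lemma phi_neq0 a : is_rank1 phi -> a != 0 -> phi a != 0.
Proof.
move=> phi_rank1 a_neq0; apply/eqP => phi_a0.
have := phi_rank1 a a_neq0; rewrite /deg_tau phi_a0 size_poly0 expn0.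
move=> /quot_card_eq1[c /(congr1 phi)/eqP]; rewrite phiM phi_a0 ore_mul0l.
by case: phi_Drinfeld => [[_ _ -> _] _ _]; rewrite oner_eq0.
Qed.

End DrinfeldModule.

Section DrinfeldModuleOnCurve.
Variables (F L : finFieldType) (iota : {rmorphism F -> L}).
Variables (p : {poly F}) (alpha : F) (m : nat) (h f : {poly F}).
Hypotheses (p_irr : irreducible_poly p) (m_gt0 : (0 < m)%N) (alpha_neq0 : alpha != 0).
Hypotheses (f_def : f = alpha *: p ^+ m) (p_h : ~~ (p %| h)).
Variables (gamma : {rmorphism AH h f -> L}) (phi : AH h f -> {poly L}).
Hypotheses (gammaC : forall c, gamma (AHconst h f c) = iota c).
Hypothesis gamma_ker : forall a, gamma a = 0 <-> in_frakp p a.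
Hypotheses (phi_Drinfeld : is_Drinfeld_module iota gamma phi) (phi_rank1 : is_rank1 phi).

Let p_neq0 : p != 0.
Proof. by case: p_irr => /ltnW; rewrite size_poly_gt0. Qed.

Let pbar := AHpi h f p%:P.
Let hbar := AHpi h f h%:P.

Let gamma_Ybar : gamma (Ybar h f) = 0.
Proof. by apply/gamma_ker; exists 0, 1; rewrite mul0r add0r mul1r. Qed.

Let gamma_pbar : gamma pbar = 0.
Proof. by apply/gamma_ker; exists 1, 0; rewrite mul0r addr0 mul1r. Qed.

Let gamma_Ybar_add_h : gamma (Ybar h f + hbar) != 0.
Proof.
rewrite rmorphD gamma_Ybar add0r; apply/eqP => /gamma_ker; apply: h_notin_frakp => //.
by rewrite f_def dvdpZr // dvdp_exp.
Qed.

Let phi_Ybar : phi (Ybar h f) != 0.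
Proof. exact: (phi_neq0 phi_Drinfeld phi_rank1 (Ybar_neq0 h f)). Qed.

Let phi_pbar : phi pbar != 0.
Proof.
exact: (phi_neq0 phi_Drinfeld phi_rank1 (AHpi_polyC_neq0 h f p_neq0)).
Qed.

Lemma lowdeg_phi_Ybar : lowdeg (phi (Ybar h f)) = (m * lowdeg (phi pbar))%N.
Proof.
have gamma_alpha : gamma (AHconst h f alpha) != 0 by rewrite gammaC fmorph_eq0.
have fbarE : AHpi h f f%:P = AHconst h f alpha * pbar ^+ m.
  have -> : f%:P = (alpha%:P)%:P * p%:P ^+ m :> {poly {poly F}}.
    by rewrite f_def -mul_polyC polyCM rmorphXn.
  by rewrite AHpiM AHpiX.
have phi_alpha := phi_neq0_gamma phi_Drinfeld gamma_alpha.
have phi_Ybar_add_h := phi_neq0_gamma phi_Drinfeld gamma_Ybar_add_h.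
rewrite -[LHS]addn0 -(lowdeg_phi_gamma phi_Drinfeld gamma_Ybar_add_h).
rewrite -(lowdeg_phi_mul phi_Drinfeld phi_Ybar phi_Ybar_add_h) Ybar_mul_Ybar_add_h fbarE.
rewrite (lowdeg_phi_mul phi_Drinfeld phi_alpha (phi_expr_neq0 phi_Drinfeld _ phi_pbar)).
rewrite (lowdeg_phi_gamma phi_Drinfeld gamma_alpha).
by rewrite (lowdeg_phi_expr phi_Drinfeld _ phi_pbar).
Qed.

Lemma size_p_le_lowdeg_phi_pbar : ((size p).-1 <= lowdeg (phi pbar))%N.
Proof.
apply: (@size_irredp_frob_fixed_root F L iota p (gamma (Xbar h f)) _ p_irr).
- by rewrite /root -(rmorph_AHpi_polyC gammaC) gamma_pbar.
- exact: (lowdeg_phi_gt0 phi_Drinfeld phi_pbar gamma_pbar).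
- exact: (gamma_frob_fixed phi_Drinfeld _ phi_pbar).
Qed.

Lemma lowdeg_phi_Ybar_ge : ((size p).-1 * m <= lowdeg (phi (Ybar h f)))%N.
Proof. by rewrite lowdeg_phi_Ybar mulnC leq_mul2l size_p_le_lowdeg_phi_pbar orbT. Qed.

Lemma size_phi_Ybar_le : (size (phi (Ybar h f)) <= size f)%N.
Proof.
have f_neq0 : f != 0.
  by rewrite f_def scaler_eq0 (negPf alpha_neq0) expf_eq0 (negPf p_neq0) andbF.
have := quot_card_Ybar_le f_neq0 (phi_rank1 (Ybar_neq0 h f)).
rewrite leq_exp2l ?finNzRing_gt1 // /deg_tau.
have f_pos : (0 < size f)%N by rewrite size_poly_gt0.
have := phi_Ybar; rewrite -size_poly_gt0 => /prednK <- le_pred.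
by rewrite -(prednK f_pos) ltnS.
Qed.

End DrinfeldModuleOnCurve.

Section Descent.
Variable L : finFieldType.
Local Notation to := (to_alg_closure L).

Definition alg_closure_preim (x : alg_closure L) : L := odflt 0 [pick y | to y == x].

Lemma alg_closure_preimK x : x ^+ #|L| = x -> to (alg_closure_preim x) = x.
Proof.
move=> /alg_closure_frob_fixed[y yx]; rewrite /alg_closure_preim.
by case: pickP => [z /eqP //|/(_ y)]; rewrite yx eqxx.
Qed.

Definition descend_poly (P : {poly alg_closure L}) : {poly L} :=
  map_poly alg_closure_preim P.

Lemma descend_polyK (P : {poly alg_closure L}) :
  (forall i, P`_i ^+ #|L| = P`_i) -> map_poly to (descend_poly P) = P.
Proof.
move=> P_fixed; have preim0 : alg_closure_preim 0 = 0.
  apply: (fmorph_inj to); rewrite alg_closure_preimK ?rmorph0 // expr0n.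
  by rewrite gtn_eqF // ltnW // finNzRing_gt1.
by apply/polyP => i; rewrite coef_map /= coef_map_id0 // alg_closure_preimK.
Qed.

End Descent.

Lemma Dr1_ore_conj (F L : finFieldType) (iota : {rmorphism F -> L}) (h f : {poly F})
    (gamma : {rmorphism AH h f -> L}) (phi psi : AH h f -> {poly L}) (lam : alg_closure L) :
  lam != 0 ->
  (forall a, map_poly (to_alg_closure L) (psi a)
             = ore_conj #|F| lam (map_poly (to_alg_closure L) (phi a))) ->
  Dr1 iota gamma phi -> Dr1 iota gamma psi /\ Lbar_isomorphic phi psi.
Proof.
set to := to_alg_closure L => lam_neq0 psiE.
move=> [[[phiD phiM phi1 phiC] phi_coef0 [a0 a0_deg]] phi_rank1].
have q_gt0 : (0 < #|F|)%N := ltnW (finNzRing_gt1 F).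
have to_inj : injective (map_poly to).
  by apply: map_inj_poly; [apply: fmorph_inj | apply: rmorph0].
have size_psi a : size (psi a) = size (phi a).
  by rewrite -(size_map_poly to) psiE size_ore_conj // size_map_poly.
split; last by exists lam; split => // a; rewrite ore_conjE // psiE.
split; first split.
- split=> [a b|a b||c]; apply: to_inj.
  + by rewrite psiE phiD rmorphD ore_conjD -!psiE rmorphD.
  + by rewrite ore_mul_map // !psiE phiM ore_mul_map // ore_conj_mul.
  + by rewrite psiE phi1 rmorph1 -polyC1 ore_conjC // rmorph1.
  + by rewrite psiE phiC !map_polyC ore_conjC.
- move=> a; apply: (fmorph_inj to); rewrite -coef_map psiE coef_ore_conj coef_map.
  by rewrite phi_coef0 expn0 expr1 mulrAC mulfV // mul1r.
- by exists a0; rewrite /deg_tau size_psi.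
- by move=> a a_neq0; rewrite /deg_tau size_psi; apply: phi_rank1.
Qed.

Lemma Dr1_normalize (F L : finFieldType) (iota : {rmorphism F -> L}) (h f : {poly F})
    (gamma : {rmorphism AH h f -> L}) (phi : AH h f -> {poly L})
    (y : AH h f) (ell : L) (n : nat) :
  #|L| = (#|F| ^ n)%N -> ell != 0 -> phi y = ell *: 'X^n -> Dr1 iota gamma phi ->
  exists psi : AH h f -> {poly L},
    [/\ Dr1 iota gamma psi, Lbar_isomorphic phi psi & psi y = 'X^n].
Proof.
set to := to_alg_closure L => card_L ell_neq0 phi_y phi_Dr1.
have q_gt0 : (0 < #|F|)%N := ltnW (finNzRing_gt1 F).
have L_gt0 : (0 < #|L|.-1)%N by rewrite -subn1 subn_gt0 finNzRing_gt1.
have [lam lamE] := closed_field_nroot (to ell) L_gt0.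
have lam_neq0 : lam != 0.
  apply: contra_neq ell_neq0 => lam0; apply: (fmorph_inj to).
  by rewrite -lamE lam0 expr0n gtn_eqF ?rmorph0.
pose Phi a := ore_conj #|F| lam (map_poly to (phi a)).
have PhiM a b : Phi (a * b) = ore_mul #|F| (Phi a) (Phi b).
  case: phi_Dr1 => [[[_ phiM _ _] _ _] _].
  by rewrite /Phi phiM ore_mul_map // ore_conj_mul.
have Phi_y : Phi y = 'X^n.
  apply/polyP => i; rewrite coef_ore_conj coef_map phi_y coefZ !coefXn.
  case: eqP => [->|_] /=; last by rewrite mulr0 rmorph0 mulr0 mul0r.
  rewrite mulr1 -card_L -(prednK (ltnW (finNzRing_gt1 L))) exprVn exprS lamE.
  by rewrite mulfV // mulf_neq0 // fmorph_eq0.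
have Phi_fixed a i : (Phi a)`_i ^+ #|L| = (Phi a)`_i.
  by rewrite card_L; apply: ore_mulXn_comm => //; rewrite -Phi_y -!PhiM mulrC.
have PhiE a := descend_polyK (Phi_fixed a).
have [psi_Dr1 psi_iso] := Dr1_ore_conj lam_neq0 PhiE phi_Dr1.
exists (fun a => descend_poly (Phi a)); split => //.
apply: (@map_inj_poly _ _ to); [exact: fmorph_inj | exact: rmorph0 |].
by rewrite PhiE Phi_y map_polyXn.
Qed.

Theorem lemma6 (F L : finFieldType) (iota : {rmorphism F -> L})
    (d m : nat) (p : {poly F}) (alpha : F) (h : {poly F}) :
  odd d -> (5 <= d)%N -> (0 < m)%N -> (m %| d)%N ->
  p \is monic -> irreducible_poly p -> size p = (d %/ m).+1 ->
  alpha != 0 ->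
  h != 0 -> (size h <= (d.-1)./2.+1)%N -> ~~ (p %| h) ->
  let f := alpha *: p ^+ m in
  nonsingular_curve h f ->
  #|L| = (#|F| ^ d)%N ->
  forall gamma : {rmorphism AH h f -> L},
  (forall c : F, gamma (AHconst h f c) = iota c) ->
  (forall a : AH h f, gamma a = 0 <-> in_frakp p a) ->
  forall phi : AH h f -> {poly L},
  Dr1 iota gamma phi ->
  exists psi : AH h f -> {poly L},
    [/\ Dr1 iota gamma psi, Lbar_isomorphic phi psi & psi (Ybar h f) = 'X^d].
Proof.
move=> _ _ m_gt0 m_d _ p_irr size_p alpha_neq0 _ _ p_h f _ card_L gamma gammaC gamma_ker.
move=> phi phi_Dr1; have [phi_Drinfeld phi_rank1] := phi_Dr1.
have d_eq : ((size p).-1 * m)%N = d by rewrite size_p divnK.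
have size_f : size f = d.+1.
  have p_neq0 : p != 0 by case: p_irr => /ltnW; rewrite size_poly_gt0.
  by rewrite size_scale // -d_eq -size_exp prednK // size_poly_gt0 expf_neq0.
have phi_Y_neq0 := phi_neq0 phi_Drinfeld phi_rank1 (Ybar_neq0 h f).
have phi_Y : phi (Ybar h f) = (phi (Ybar h f))`_d *: 'X^d.
  apply: (lowdeg_monomial phi_Y_neq0).
  - by rewrite -size_f (size_phi_Ybar_le p_irr alpha_neq0 erefl phi_Drinfeld phi_rank1).
  - rewrite -{1}d_eq.
    exact: (lowdeg_phi_Ybar_ge p_irr m_gt0 alpha_neq0 erefl p_h gammaC gamma_ker
              phi_Drinfeld phi_rank1).
apply: (Dr1_normalize card_L _ phi_Y phi_Dr1).
by apply: contra_neq phi_Y_neq0 => ell0; rewrite phi_Y ell0 scale0r.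
Qed.
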